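(* Let $N\equiv 3\pmod 4$ be a prime and let $h_1,h_2,c_1,c_2,c_4\in\mathbb Z$ with $4c_1c_4-c_2^2\not\equiv 0\pmod N$. Let $a,b$ be arbitrary integers coprime to $N$, and let $L(c_1,c_2,c_4,h_1,h_2)$ denote the number of triples $d_1,d_2,d_4\pmod N$ satisfying \[ h_1\equiv a(d_1+d_4),\qquad (d_1d_4-d_2^2)h_2\equiv b(d_4c_1-d_2c_2+d_1c_4),\qquad d_1d_4-d_2^2\not\equiv 0\pmod N. \] Then \[ L(c_1,c_2,c_4,h_1,h_2)=\delta_{h_1\equiv h_2\equiv 0\ (\mathrm{mod}\ N)}\,\delta_{c_1\equiv c_4,\ c_2\equiv 0\ (\mathrm{mod}\ N)}\,N^2+\mathcal O(N), \] where $\delta_{\cdot}$ is $1$ if the indicated condition holds and $0$ otherwise, and the implied constant is absolute. *)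

From mathcomp Require Import all_boot all_order all_algebra.
Set Implicit Arguments. Unset Strict Implicit. Unset Printing Implicit Defensive.
Import Order.TTheory GRing.Theory Num.Theory.
Local Open Scope ring_scope.

Definition Lcond (N : nat) (a b h1 h2 c1 c2 c4 d1 d2 d4 : int) : bool :=
  [&& (h1 == a * (d1 + d4) %[mod N%:Z])%Z,
      ((d1 * d4 - d2 ^+ 2) * h2 == b * (d4 * c1 - d2 * c2 + d1 * c4) %[mod N%:Z])%Z
    & (d1 * d4 - d2 ^+ 2 != 0 %[mod N%:Z])%Z].

Definition Lcount (N : nat) (a b h1 h2 c1 c2 c4 : int) : nat :=
  #|[set d : 'I_N * 'I_N * 'I_N |
      Lcond N a b h1 h2 c1 c2 c4 (d.1.1 : nat)%:Z (d.1.2 : nat)%:Z (d.2 : nat)%:Z]|.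

Definition Ldelta (N : nat) (h1 h2 c1 c2 c4 : int) : nat :=
  [&& (h1 == 0 %[mod N%:Z])%Z, (h2 == 0 %[mod N%:Z])%Z,
      (c1 == c4 %[mod N%:Z])%Z & (c2 == 0 %[mod N%:Z])%Z].

(** Reduce modulo N to the field F = 'F_N.  Since a <> 0, the first condition
    says d4 = h1/a - d1, so the count is over pairs (d1, d2).  For fixed d1 the
    second condition is a quadratic equation in d2 with leading coefficients
    (-h2, b c2), which has at most two roots unless h2 = c2 = 0; then it is the
    equation (c4 - c1) d1 + (h1/a) c1 = 0 on d1 alone, nontrivial (c1 <> 0 by the
    discriminant) unless moreover c1 = c4 and h1 = 0.  Either way there are at
    most 2N solutions.  In the remaining degenerate case every pair is counted
    except those with d1^2 + d2^2 = 0, of which there are at most 2N. *)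

From mathcomp Require Import all_boot all_order all_algebra.
From mathcomp Require Import ring zify.
Import Order.TTheory GRing.Theory Num.Theory.
Set Implicit Arguments. Unset Strict Implicit.
Local Open Scope ring_scope.

Lemma card_pairs_leq (T U : finType) (P : pred (T * U)) (k : nat) :
  (forall x, #|[set y | P (x, y)]| <= k)%N -> (#|[set u | P u]| <= #|T| * k)%N.
Proof.
move=> fiberP.
have -> : #|[set u | P u]| = (\sum_x \sum_(y | P (x, y)) 1)%N.
  by rewrite pair_big_dep /= -sum1_card; apply: eq_bigl => -[x y]; rewrite inE.
rewrite -sum_nat_const leq_sum // => x _.
by rewrite sum1_card -cardsE fiberP.
Qed.

Lemma card_quadratic_roots (F : finFieldType) (A B C : F) :
  [|| A != 0, B != 0 | C != 0] ->
  (#|[set u | (A * u ^+ 2 + B * u + C == 0)%R]| <= 2)%N.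
Proof.
apply: contraTT; rewrite -ltnNge => /card_gt2P[u [v [w [[]]]]].
rewrite !inE => /eqP fu /eqP fv /eqP fw [neq_uv neq_vw neq_wu].
have secant_eq0 x y : A * x ^+ 2 + B * x + C = 0 -> A * y ^+ 2 + B * y + C = 0 ->
    x != y -> A * (x + y) + B = 0.
  move=> fx fy; rewrite -subr_eq0 => nxy; apply: (mulIf nxy); rewrite mul0r.
  by rewrite -[RHS]subr0 -{2}fy -fx; ring.
have Auv := secant_eq0 _ _ fu fv neq_uv.
have Auw : A * (u + w) + B = 0 by apply: secant_eq0; rewrite // eq_sym.
have A0 : A = 0.
  apply: (mulIf (_ : v - w != 0)); first by rewrite subr_eq0.
  by rewrite mul0r -[RHS]subr0 -{2}Auw -Auv; ring.
have B0 : B = 0 by rewrite -Auv A0 mul0r add0r.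
by rewrite A0 B0 -fu A0 B0 !mul0r !add0r !eqxx.
Qed.

Definition Lset (F : finFieldType) (a b h1 h2 c1 c2 c4 : F) : {set F * F * F} :=
  [set d | [&& h1 == a * (d.1.1 + d.2),
               (d.1.1 * d.2 - d.1.2 ^+ 2) * h2
                 == b * (d.2 * c1 - d.1.2 * c2 + d.1.1 * c4)
             & d.1.1 * d.2 - d.1.2 ^+ 2 != 0]].

Section LsetCount.

Variables (F : finFieldType) (a b h1 h2 c1 c2 c4 : F).
Hypotheses (a_neq0 : a != 0) (b_neq0 : b != 0)
  (disc_neq0 : 4 * c1 * c4 - c2 ^+ 2 != 0).

Local Notation S := (Lset a b h1 h2 c1 c2 c4).
Local Notation s := (h1 / a).
Local Notation pairs := [set u : F * F | (u, s - u.1) \in S].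

Lemma card_Lset_pairs : #|S| = #|pairs|.
Proof.
symmetry; apply: on_card_preimset; exists fst => // d.
rewrite inE => /and3P[/eqP-> _ _]; rewrite (mulrC a) mulfK //.
by case: d => -[d1 d2] d4 /=; rewrite addrC addKr.
Qed.

Lemma mem_Lset_pairs x y : (((x, y), s - x) \in S) =
  ((x * (s - x) - y ^+ 2) * h2 == b * ((s - x) * c1 - y * c2 + x * c4))
  && (x * (s - x) - y ^+ 2 != 0).
Proof. by rewrite inE /= addrC subrK mulrC divfK // eqxx. Qed.

Lemma card_Lset_degenerate : h1 = 0 -> h2 = 0 -> c1 = c4 -> c2 = 0 ->
  (#|F| ^ 2 <= #|S| + 2 * #|F|)%N /\ (#|S| <= #|F| ^ 2)%N.
Proof.
move=> h1_0 h2_0 c14 c2_0; rewrite card_Lset_pairs.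
set bad := [set u : F * F | u.1 ^+ 2 + u.2 ^+ 2 == 0].
have pairsE : pairs = ~: bad.
  apply/setP => -[x y]; rewrite [LHS]inE /= mem_Lset_pairs !inE /=.
  rewrite h1_0 h2_0 c14 c2_0 mul0r sub0r mulr0 eq_sym.
  rewrite (_ : _ * c4 - _ + _ = 0); last by ring.
  by rewrite mulr0 eqxx (_ : _ - _ = - (x ^+ 2 + y ^+ 2)) ?oppr_eq0 //; ring.
have card_bad : (#|bad| <= #|F| * 2)%N.
  apply: card_pairs_leq => x.
  have roots_le2 := card_quadratic_roots (A := 1) (B := 0) (C := x ^+ 2).
  apply: leq_trans (roots_le2 _); last by rewrite oner_eq0.
  apply: subset_leq_card; apply/subsetP => y.
  by rewrite !inE mul1r mul0r addr0 addrC.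
rewrite pairsE -mulnn; move: card_bad (cardsC bad); rewrite card_prod.
by set q := #|F|; set nbad := #|bad|; set ngood := #|~: bad|; split; lia.
Qed.

Lemma card_Lset_generic : ~~ [&& h1 == 0, h2 == 0, c1 == c4 & c2 == 0] ->
  (#|S| <= 2 * #|F|)%N.
Proof.
move=> not_degenerate; rewrite card_Lset_pairs mulnC.
have [/andP[/eqP h2_0 /eqP c2_0] | h2c2_neq0] := boolP ((h2 == 0) && (c2 == 0)).
  set R := [set x : F | 0 * x ^+ 2 + (c4 - c1) * x + s * c1 == 0].
  apply: (@leq_trans #|setX R [set: F]|).
    apply: subset_leq_card; apply/subsetP => -[x y].
    rewrite inE /= mem_Lset_pairs !inE andbT h2_0 c2_0 mulr0 eq_sym mulf_eq0.
    rewrite (negbTE b_neq0) mul0r add0r => /andP[/eqP linear_eq0 _].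
    by rewrite /= -linear_eq0; apply/eqP; ring.
  rewrite cardsX cardsT mulnC leq_mul2l card_quadratic_roots ?orbT //.
  rewrite eqxx /= subr_eq0.
  have [c14 | //] := eqVneq c4 c1; rewrite !mulf_neq0 ?invr_neq0 //.
    by rewrite h2_0 c2_0 c14 !eqxx !andbT in not_degenerate.
  apply: contraNneq disc_neq0 => c1_0; rewrite c2_0 c14 c1_0.
  by apply/eqP; ring.
apply: card_pairs_leq => x.
pose C := x * (s - x) * h2 - b * ((s - x) * c1 + x * c4).
apply: leq_trans (card_quadratic_roots (A := - h2) (B := b * c2) (C := C) _).
  apply: subset_leq_card; apply/subsetP => y.
  rewrite inE /= mem_Lset_pairs inE -subr_eq0 => /andP[/eqP quadratic_eq _].
  by rewrite -quadratic_eq /C; apply/eqP; ring.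
by rewrite oppr_eq0 mulf_eq0 (negbTE b_neq0) orbA -negb_and h2c2_neq0.
Qed.

Lemma card_Lset_approx :
  `| #|S|%:Z - ([&& h1 == 0, h2 == 0, c1 == c4 & c2 == 0]%R * #|F| ^ 2)%N%:Z |
    <= (2 * #|F|)%N%:Z.
Proof.
have [|not_degenerate] := boolP [&& _, _, _ & _].
  move=> /and4P[/eqP h1_0 /eqP h2_0 /eqP c14 /eqP c2_0].
  have [lower upper] := card_Lset_degenerate h1_0 h2_0 c14 c2_0.
  by move: lower upper; set q := #|F|; lia.
have upper := card_Lset_generic not_degenerate.
by move: upper; set q := #|F|; lia.
Qed.

End LsetCount.

Section ReductionModPrime.

Variable p : nat.
Hypothesis p_prime : prime p.

Lemma eqz_mod_Fp (x y : int) : (x == y %[mod p])%Z = (x%:~R == y%:~R :> 'F_p).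
Proof. by rewrite eqz_mod_dvd (dvdz_pcharf (pchar_Fp p_prime)) rmorphB subr_eq0. Qed.

Lemma coprimez_Fp_neq0 (x : int) : coprimez x p -> x%:~R != 0 :> 'F_p.
Proof.
rewrite -(dvdz_pcharf (pchar_Fp p_prime)) coprimezE coprime_sym.
by rewrite prime_coprime // dvdzE.
Qed.

Lemma natr_Fp_inj : injective (fun i : 'I_p => i%:R : 'F_p).
Proof.
by move=> i j /(congr1 val); rewrite /= !val_Fp_nat // !modn_small //; apply: val_inj.
Qed.

Lemma Lcount_Fp (a b h1 h2 c1 c2 c4 : int) :
  Lcount p a b h1 h2 c1 c2 c4 =
  #|Lset (a%:~R : 'F_p) b%:~R h1%:~R h2%:~R c1%:~R c2%:~R c4%:~R|.
Proof.
pose embed (d : 'I_p * 'I_p * 'I_p) : 'F_p * 'F_p * 'F_p :=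
  ((d.1.1%:R, d.1.2%:R), d.2%:R).
have embed_bij : bijective embed.
  apply: inj_card_bij; last by rewrite !card_prod card_Fp // card_ord.
  by move=> [[? ?] ?] [[? ?] ?] [/natr_Fp_inj-> /natr_Fp_inj-> /natr_Fp_inj->].
rewrite -(on_card_preimset (onW_bij _ embed_bij)); apply: eq_card => d.
by rewrite !inE /Lcond !eqz_mod_Fp !(rmorphB, rmorphM, rmorphD, rmorphXn).
Qed.

Lemma Ldelta_Fp (h1 h2 c1 c2 c4 : int) :
  Ldelta p h1 h2 c1 c2 c4 =
  [&& h1%:~R == 0 :> 'F_p, h2%:~R == 0 :> 'F_p, c1%:~R == c4%:~R :> 'F_p
    & c2%:~R == 0 :> 'F_p].
Proof. by rewrite /Ldelta !eqz_mod_Fp. Qed.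

End ReductionModPrime.

Theorem lemma8 :
  exists C : nat,
  forall (N : nat) (h1 h2 c1 c2 c4 a b : int),
    prime N -> (N %% 4 = 3)%N ->
    (4 * c1 * c4 - c2 ^+ 2 != 0 %[mod N%:Z])%Z ->
    coprimez a N%:Z -> coprimez b N%:Z ->
    (`| (Lcount N a b h1 h2 c1 c2 c4)%:Z
         - (Ldelta N h1 h2 c1 c2 c4 * N ^ 2)%N%:Z | <= (C * N)%N%:Z).
Proof.
(* The argument does not need N = 3 (mod 4). *)
exists 2%N => N h1 h2 c1 c2 c4 a b N_prime _ disc a_coprime b_coprime.
have a_neq0 := coprimez_Fp_neq0 N_prime a_coprime.
have b_neq0 := coprimez_Fp_neq0 N_prime b_coprime.
have disc_neq0 : 4 * c1%:~R * c4%:~R - c2%:~R ^+ 2 != 0 :> 'F_N.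
  by move: disc; rewrite eqz_mod_Fp // !(rmorphB, rmorphM, rmorphXn).
have := card_Lset_approx h1%:~R h2%:~R a_neq0 b_neq0 disc_neq0.
by rewrite card_Fp // Lcount_Fp // Ldelta_Fp.
Qed.
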